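(* For $i=1,2$ let $g_i\in SU(2)$ be a lift of a rotation of $S^2\cong\mathbb{C}P^1$ by an arbitrarily small angle $\epsilon_i$ (about different axes for $i=1,2$), and let \[\Upsilon_i=\{[a,g_i(a),b]\in\mathrm{Sym}^3\mathbb{C}P^1:\ a,b\in\mathbb{C}P^1\}\subset\mathrm{Sym}^3\mathbb{C}P^1\cong\mathbb{C}P^3.\] Then $\deg\Upsilon_i=4$.
   Context: $\mathrm{Sym}^3\mathbb{C}P^1$ is identified with $\mathbb{C}P^3=\mathbb{P}(S^3\mathbb{C}^2)$ by sending an unordered triple of points of $\mathbb{C}P^1$ to the (projectivized) product of the corresponding linear forms, i.e. the homogeneous cubic in two variables with those roots. $SU(2)$ acts on $\mathbb{C}P^1\cong S^2$ by rotations. The degree of a complex surface in $\mathbb{C}P^3$ is the number of its intersection points with a generic line. *)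

From HB Require Import structures.
From mathcomp Require Import all_boot all_order all_algebra.
From mathcomp Require Import mpoly.
From mathcomp Require Import all_classical all_reals all_analysis.
From mathcomp Require Import complex.
Set Implicit Arguments. Unset Strict Implicit. Unset Printing Implicit Defensive.
Import Order.TTheory GRing.Theory Num.Theory.
Local Open Scope ring_scope.

Section Defs.
Variable R : realType.
Local Notation C := (complex R).

Definition is_SU2 (g : 'M[C]_2) : Prop :=
  g *m (map_mx (@conjc R) g)^T = 1%:M /\ \det g = 1.

(* The identification CP^1 = S^2 (Bloch / Hopf map): for a nonzero a in C^2,
   [a0 : a1] |-> (2 Re(conj a0 a1), 2 Im(conj a0 a1), |a0|^2 - |a1|^2) / (|a0|^2 + |a1|^2). *)
Definition bloch (a : 'cV[C]_2) : 'cV[R]_3 :=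
  let a0 := a 0 0 in let a1 := a 1 0 in
  let z := conjc a0 * a1 in
  let n0 := complex.Re (conjc a0 * a0) in let n1 := complex.Re (conjc a1 * a1) in
  let N := n0 + n1 in
  \col_(k < 3) (nth 0 [:: 2 * complex.Re z / N; 2 * complex.Im z / N; (n0 - n1) / N] k).

Definition rotation_by (rho : 'M[R]_3) (eps : R) : Prop :=
  rho^T *m rho = 1%:M /\ \det rho = 1 /\ \tr rho = 1 + 2 * cos eps.

Definition lifts_rotation_by (g : 'M[C]_2) (eps : R) : Prop :=
  exists rho : 'M[R]_3, rotation_by rho eps /\
    forall a : 'cV[C]_2, a != 0 -> bloch (g *m a) = rho *m bloch a.

(* The linear form in (u,v) vanishing at the point [a0 : a1]:  a1 u - a0 v,
   encoded as its coefficient pair (coef of u, coef of v). *)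
Definition linform (a : 'cV[C]_2) : C * C := (a 1 0, - a 0 0).

(* Coefficients (of u^3, u^2 v, u v^2, v^3) of the product of three linear forms:
   this is the identification Sym^3 CP^1 = P(S^3 C^2) = CP^3. *)
Definition cubic3 (l1 l2 l3 : C * C) : 'cV[C]_4 :=
  let: (x1, y1) := l1 in let: (x2, y2) := l2 in let: (x3, y3) := l3 in
  \col_(k < 4) (nth 0 [:: x1 * x2 * x3;
                         x1 * x2 * y3 + x1 * y2 * x3 + y1 * x2 * x3;
                         x1 * y2 * y3 + y1 * x2 * y3 + y1 * y2 * x3;
                         y1 * y2 * y3] k).

(* The (affine cone over the) surface Upsilon_g = { [a, g(a), b] } in CP^3. *)
Definition Upsilon (g : 'M[C]_2) (w : 'cV[C]_4) : Prop :=
  exists a b : 'cV[C]_2, a != 0 /\ b != 0 /\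
    w = cubic3 (linform a) (linform (g *m a)) (linform b).

Definition proj_eq (w w' : 'cV[C]_4) : Prop := exists c : C, c != 0 /\ w' = c *: w.

Definition proj_card (S : 'cV[C]_4 -> Prop) (n : nat) : Prop :=
  exists f : 'I_n -> 'cV[C]_4,
    (forall i, f i != 0 /\ S (f i)) /\
    (forall i j, proj_eq (f i) (f j) -> i = j) /\
    (forall w, w != 0 -> S w -> exists i, proj_eq (f i) w).

Definition on_line (p q w : 'cV[C]_4) : Prop := exists s t : C, w = s *: p + t *: q.

Definition pq_coords (p q : 'cV[C]_4) : 'I_8 -> C :=
  fun i => if (i < 4)%N then p (inord i) 0 else q (inord (i - 4)) 0.

(* Degree of a surface S in CP^3: number of intersection points with a generic line,
   i.e. for all lines spanned by (p,q) outside the zero set of some nonzero polynomial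
   in the 8 coordinates of (p,q) (a proper Zariski-closed set). *)
Definition has_degree (S : 'cV[C]_4 -> Prop) (d : nat) : Prop :=
  exists P : {mpoly C[8]}, P != 0 /\
    forall p q : 'cV[C]_4, P.@[pq_coords p q] != 0 ->
      proj_card (fun w => on_line p q w /\ S w) d.

End Defs.

From HB Require Import structures.
From mathcomp Require Import all_boot all_order all_algebra.
From mathcomp Require Import mpoly.
From mathcomp Require Import all_classical all_reals all_analysis.
From mathcomp Require Import complex separable ring lra.
Set Implicit Arguments. Unset Strict Implicit. Unset Printing Implicit Defensive.
Import Order.TTheory GRing.Theory Num.Theory.
Local Open Scope ring_scope.

(* Write points of CP^1 as the linear forms vanishing there; g acts on them
   through its cofactor matrix N = (adj g)^T.  A cubic l1 l2 l3 lies on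
   Upsilon_g exactly when some factor l_j is proportional to N l_i with i != j,
   i.e. when the product over i != j of the determinants [l_j, N l_i] vanishes;
   this product is a quartic form F in the coefficients of the cubic.  A line
   s p + q thus meets Upsilon_g in the roots of the quartic polynomial
   F(s p + q): in four points as soon as F(p) and the resultant of this
   polynomial with its derivative do not vanish, a polynomial condition on
   (p, q).  For a rotation by a small nonzero angle, tr g is neither 0 nor +-2,
   so N has two eigenvalues with distinct squares, and an explicit line built
   from an eigenbasis satisfies the condition. *)

(* Each entry (e, c) is a monomial of F: e lists the indices k of the
   coefficients w_k of u^(3-k) v^k in the cubic, and c is its coefficient, an
   integer polynomial in the entries N 0 0, N 0 1, N 1 0, N 1 1 (indices 0..3).
   The table is the computer-algebra expansion verified by [quartic_cubic]. *)
Definition quartic_table : seq (seq nat * seq (int * seq nat)) := [::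
  ([:: 3; 3; 3; 3],
   [:: (1, [:: 1; 1; 1; 1; 1; 1])]);
  ([:: 2; 3; 3; 3],
   [:: (- 2, [:: 1; 1; 1; 1; 1; 3]); (2, [:: 0; 1; 1; 1; 1; 1])]);
  ([:: 2; 2; 3; 3],
   [:: (1, [:: 1; 1; 1; 1; 3; 3]); (- 4, [:: 0; 1; 1; 1; 1; 3]); (1, [:: 0; 0; 1; 1; 1; 1])]);
  ([:: 2; 2; 2; 3],
   [:: (2, [:: 0; 1; 1; 1; 3; 3]); (- 2, [:: 0; 0; 1; 1; 1; 3])]);
  ([:: 2; 2; 2; 2],
   [:: (1, [:: 0; 0; 1; 1; 3; 3])]);
  ([:: 1; 3; 3; 3],
   [:: (2, [:: 1; 1; 1; 1; 3; 3]); (- 2, [:: 1; 1; 1; 1; 1; 2]); (2, [:: 0; 1; 1; 1; 1; 3]);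
       (2, [:: 0; 0; 1; 1; 1; 1])]);
  ([:: 1; 2; 3; 3],
   [:: (- 2, [:: 1; 1; 1; 3; 3; 3]); (3, [:: 1; 1; 1; 1; 2; 3]); (1, [:: 0; 1; 1; 1; 3; 3]);
       (- 3, [:: 0; 1; 1; 1; 1; 2]); (- 1, [:: 0; 0; 1; 1; 1; 3]); (2, [:: 0; 0; 0; 1; 1; 1])]);
  ([:: 1; 2; 2; 3],
   [:: (- 1, [:: 1; 1; 1; 2; 3; 3]); (- 3, [:: 0; 1; 1; 3; 3; 3]); (4, [:: 0; 1; 1; 1; 2; 3]);
       (- 1, [:: 0; 0; 1; 1; 1; 2]); (- 3, [:: 0; 0; 0; 1; 1; 3])]);
  ([:: 1; 2; 2; 2],
   [:: (- 1, [:: 0; 1; 1; 2; 3; 3]); (- 1, [:: 0; 0; 1; 3; 3; 3]); (1, [:: 0; 0; 1; 1; 2; 3]);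
       (1, [:: 0; 0; 0; 1; 3; 3])]);
  ([:: 1; 1; 3; 3],
   [:: (1, [:: 1; 1; 3; 3; 3; 3]); (- 2, [:: 1; 1; 1; 2; 3; 3]); (1, [:: 1; 1; 1; 1; 2; 2]);
       (2, [:: 0; 1; 1; 3; 3; 3]); (3, [:: 0; 0; 1; 1; 3; 3]); (- 2, [:: 0; 0; 1; 1; 1; 2]);
       (2, [:: 0; 0; 0; 1; 1; 3]); (1, [:: 0; 0; 0; 0; 1; 1])]);
  ([:: 1; 1; 2; 3],
   [:: (1, [:: 1; 1; 2; 3; 3; 3]); (- 1, [:: 1; 1; 1; 2; 2; 3]); (1, [:: 0; 1; 3; 3; 3; 3]);
       (- 3, [:: 0; 1; 1; 2; 3; 3]); (1, [:: 0; 1; 1; 1; 2; 2]); (3, [:: 0; 0; 1; 1; 2; 3]);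
       (- 1, [:: 0; 0; 0; 1; 1; 2]); (- 1, [:: 0; 0; 0; 0; 1; 3])]);
  ([:: 1; 1; 2; 2],
   [:: (1, [:: 0; 1; 2; 3; 3; 3]); (- 1, [:: 0; 1; 1; 2; 2; 3]); (- 2, [:: 0; 0; 1; 2; 3; 3]);
       (- 1, [:: 0; 0; 0; 3; 3; 3]); (1, [:: 0; 0; 0; 1; 2; 3])]);
  ([:: 1; 1; 1; 3],
   [:: (1, [:: 1; 1; 2; 2; 3; 3]); (1, [:: 0; 0; 3; 3; 3; 3]); (- 2, [:: 0; 0; 1; 2; 3; 3]);
       (1, [:: 0; 0; 1; 1; 2; 2]); (2, [:: 0; 0; 0; 3; 3; 3]); (1, [:: 0; 0; 0; 0; 3; 3])]);
  ([:: 1; 1; 1; 2],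
   [:: (1, [:: 0; 1; 2; 2; 3; 3]); (1, [:: 0; 0; 2; 3; 3; 3]); (- 1, [:: 0; 0; 1; 2; 2; 3]);
       (- 1, [:: 0; 0; 0; 2; 3; 3])]);
  ([:: 1; 1; 1; 1],
   [:: (1, [:: 0; 0; 2; 2; 3; 3])]);
  ([:: 0; 3; 3; 3],
   [:: (- 2, [:: 1; 1; 1; 3; 3; 3]); (3, [:: 1; 1; 1; 1; 2; 3]); (- 3, [:: 0; 1; 1; 1; 3; 3]);
       (- 3, [:: 0; 1; 1; 1; 1; 2]); (3, [:: 0; 0; 1; 1; 1; 3]); (2, [:: 0; 0; 0; 1; 1; 1])]);
  ([:: 0; 2; 3; 3],
   [:: (2, [:: 1; 1; 3; 3; 3; 3]); (- 5, [:: 1; 1; 1; 2; 3; 3]); (2, [:: 1; 1; 1; 1; 2; 2]);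
       (1, [:: 0; 1; 1; 3; 3; 3]); (4, [:: 0; 1; 1; 1; 2; 3]); (- 6, [:: 0; 0; 1; 1; 3; 3]);
       (- 5, [:: 0; 0; 1; 1; 1; 2]); (1, [:: 0; 0; 0; 1; 1; 3]); (2, [:: 0; 0; 0; 0; 1; 1])]);
  ([:: 0; 2; 2; 3],
   [:: (2, [:: 1; 1; 2; 3; 3; 3]); (- 2, [:: 1; 1; 1; 2; 2; 3]); (2, [:: 0; 1; 3; 3; 3; 3]);
       (- 3, [:: 0; 1; 1; 2; 3; 3]); (2, [:: 0; 1; 1; 1; 2; 2]); (3, [:: 0; 0; 1; 3; 3; 3]);
       (3, [:: 0; 0; 1; 1; 2; 3]); (- 3, [:: 0; 0; 0; 1; 3; 3]); (- 2, [:: 0; 0; 0; 1; 1; 2]);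
       (- 2, [:: 0; 0; 0; 0; 1; 3])]);
  ([:: 0; 2; 2; 2],
   [:: (1, [:: 1; 1; 2; 2; 3; 3]); (1, [:: 0; 0; 3; 3; 3; 3]); (- 2, [:: 0; 0; 1; 2; 3; 3]);
       (1, [:: 0; 0; 1; 1; 2; 2]); (2, [:: 0; 0; 0; 3; 3; 3]); (1, [:: 0; 0; 0; 0; 3; 3])]);
  ([:: 0; 1; 3; 3],
   [:: (- 2, [:: 1; 3; 3; 3; 3; 3]); (5, [:: 1; 1; 2; 3; 3; 3]); (- 5, [:: 1; 1; 1; 2; 2; 3]);
       (- 5, [:: 0; 1; 3; 3; 3; 3]); (3, [:: 0; 1; 1; 2; 3; 3]); (5, [:: 0; 1; 1; 1; 2; 2]);
       (- 2, [:: 0; 0; 1; 3; 3; 3]); (- 3, [:: 0; 0; 1; 1; 2; 3]); (2, [:: 0; 0; 0; 1; 3; 3]);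
       (- 5, [:: 0; 0; 0; 1; 1; 2]); (5, [:: 0; 0; 0; 0; 1; 3]); (2, [:: 0; 0; 0; 0; 0; 1])]);
  ([:: 0; 1; 2; 3],
   [:: (- 3, [:: 1; 2; 3; 3; 3; 3]); (3, [:: 1; 1; 2; 2; 3; 3]); (- 2, [:: 1; 1; 1; 2; 2; 2]);
       (- 1, [:: 0; 3; 3; 3; 3; 3]); (6, [:: 0; 1; 2; 3; 3; 3]); (- 12, [:: 0; 1; 1; 2; 2; 3]);
       (- 5, [:: 0; 0; 3; 3; 3; 3]); (12, [:: 0; 0; 1; 2; 3; 3]); (3, [:: 0; 0; 1; 1; 2; 2]);
       (- 6, [:: 0; 0; 0; 3; 3; 3]); (6, [:: 0; 0; 0; 1; 2; 3]); (- 5, [:: 0; 0; 0; 0; 3; 3]);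
       (- 3, [:: 0; 0; 0; 0; 1; 2]); (- 1, [:: 0; 0; 0; 0; 0; 3])]);
  ([:: 0; 1; 2; 2],
   [:: (- 1, [:: 1; 2; 2; 3; 3; 3]); (1, [:: 1; 1; 2; 2; 2; 3]); (- 1, [:: 0; 2; 3; 3; 3; 3]);
       (3, [:: 0; 1; 2; 2; 3; 3]); (- 1, [:: 0; 1; 1; 2; 2; 2]); (- 3, [:: 0; 0; 1; 2; 2; 3]);
       (1, [:: 0; 0; 0; 1; 2; 2]); (1, [:: 0; 0; 0; 0; 2; 3])]);
  ([:: 0; 1; 1; 3],
   [:: (- 2, [:: 1; 2; 2; 3; 3; 3]); (2, [:: 1; 1; 2; 2; 2; 3]); (- 2, [:: 0; 2; 3; 3; 3; 3]);
       (3, [:: 0; 1; 2; 2; 3; 3]); (- 2, [:: 0; 1; 1; 2; 2; 2]); (- 3, [:: 0; 0; 2; 3; 3; 3]);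
       (- 3, [:: 0; 0; 1; 2; 2; 3]); (3, [:: 0; 0; 0; 2; 3; 3]); (2, [:: 0; 0; 0; 1; 2; 2]);
       (2, [:: 0; 0; 0; 0; 2; 3])]);
  ([:: 0; 1; 1; 2],
   [:: (- 1, [:: 1; 2; 2; 2; 3; 3]); (- 3, [:: 0; 2; 2; 3; 3; 3]); (4, [:: 0; 1; 2; 2; 2; 3]);
       (- 1, [:: 0; 0; 1; 2; 2; 2]); (- 3, [:: 0; 0; 0; 2; 2; 3])]);
  ([:: 0; 1; 1; 1],
   [:: (- 2, [:: 0; 2; 2; 2; 3; 3]); (2, [:: 0; 0; 2; 2; 2; 3])]);
  ([:: 0; 0; 3; 3],
   [:: (1, [:: 3; 3; 3; 3; 3; 3]); (- 3, [:: 1; 2; 3; 3; 3; 3]); (9, [:: 1; 1; 2; 2; 3; 3]);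
       (- 2, [:: 1; 1; 1; 2; 2; 2]); (3, [:: 0; 3; 3; 3; 3; 3]); (- 15, [:: 0; 1; 2; 3; 3; 3]);
       (9, [:: 0; 1; 1; 2; 2; 3]); (6, [:: 0; 0; 3; 3; 3; 3]); (- 18, [:: 0; 0; 1; 2; 3; 3]);
       (9, [:: 0; 0; 1; 1; 2; 2]); (7, [:: 0; 0; 0; 3; 3; 3]); (- 15, [:: 0; 0; 0; 1; 2; 3]);
       (6, [:: 0; 0; 0; 0; 3; 3]); (- 3, [:: 0; 0; 0; 0; 1; 2]); (3, [:: 0; 0; 0; 0; 0; 3]);
       (1, [:: 0; 0; 0; 0; 0; 0])]);
  ([:: 0; 0; 2; 3],
   [:: (2, [:: 2; 3; 3; 3; 3; 3]); (- 5, [:: 1; 2; 2; 3; 3; 3]); (5, [:: 1; 1; 2; 2; 2; 3]);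
       (5, [:: 0; 2; 3; 3; 3; 3]); (- 3, [:: 0; 1; 2; 2; 3; 3]); (- 5, [:: 0; 1; 1; 2; 2; 2]);
       (2, [:: 0; 0; 2; 3; 3; 3]); (3, [:: 0; 0; 1; 2; 2; 3]); (- 2, [:: 0; 0; 0; 2; 3; 3]);
       (5, [:: 0; 0; 0; 1; 2; 2]); (- 5, [:: 0; 0; 0; 0; 2; 3]); (- 2, [:: 0; 0; 0; 0; 0; 2])]);
  ([:: 0; 0; 2; 2],
   [:: (1, [:: 2; 2; 3; 3; 3; 3]); (- 2, [:: 1; 2; 2; 2; 3; 3]); (1, [:: 1; 1; 2; 2; 2; 2]);
       (2, [:: 0; 2; 2; 3; 3; 3]); (3, [:: 0; 0; 2; 2; 3; 3]); (- 2, [:: 0; 0; 1; 2; 2; 2]);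
       (2, [:: 0; 0; 0; 2; 2; 3]); (1, [:: 0; 0; 0; 0; 2; 2])]);
  ([:: 0; 0; 1; 3],
   [:: (2, [:: 2; 2; 3; 3; 3; 3]); (- 5, [:: 1; 2; 2; 2; 3; 3]); (2, [:: 1; 1; 2; 2; 2; 2]);
       (1, [:: 0; 2; 2; 3; 3; 3]); (4, [:: 0; 1; 2; 2; 2; 3]); (- 6, [:: 0; 0; 2; 2; 3; 3]);
       (- 5, [:: 0; 0; 1; 2; 2; 2]); (1, [:: 0; 0; 0; 2; 2; 3]); (2, [:: 0; 0; 0; 0; 2; 2])]);
  ([:: 0; 0; 1; 2],
   [:: (2, [:: 2; 2; 2; 3; 3; 3]); (- 3, [:: 1; 2; 2; 2; 2; 3]); (- 1, [:: 0; 2; 2; 2; 3; 3]);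
       (3, [:: 0; 1; 2; 2; 2; 2]); (1, [:: 0; 0; 2; 2; 2; 3]); (- 2, [:: 0; 0; 0; 2; 2; 2])]);
  ([:: 0; 0; 1; 1],
   [:: (1, [:: 2; 2; 2; 2; 3; 3]); (- 4, [:: 0; 2; 2; 2; 2; 3]); (1, [:: 0; 0; 2; 2; 2; 2])]);
  ([:: 0; 0; 0; 3],
   [:: (2, [:: 2; 2; 2; 3; 3; 3]); (- 3, [:: 1; 2; 2; 2; 2; 3]); (3, [:: 0; 2; 2; 2; 3; 3]);
       (3, [:: 0; 1; 2; 2; 2; 2]); (- 3, [:: 0; 0; 2; 2; 2; 3]); (- 2, [:: 0; 0; 0; 2; 2; 2])]);
  ([:: 0; 0; 0; 2],
   [:: (2, [:: 2; 2; 2; 2; 3; 3]); (- 2, [:: 1; 2; 2; 2; 2; 2]); (2, [:: 0; 2; 2; 2; 2; 3]);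
       (2, [:: 0; 0; 2; 2; 2; 2])]);
  ([:: 0; 0; 0; 1],
   [:: (2, [:: 2; 2; 2; 2; 2; 3]); (- 2, [:: 0; 2; 2; 2; 2; 2])]);
  ([:: 0; 0; 0; 0],
   [:: (1, [:: 2; 2; 2; 2; 2; 2])])].


Lemma quartic_table_homog : all (fun t => size t.1 == 4)%N quartic_table.
Proof. by []. Qed.

Section Forms.
Variable A : comNzRingType.
Implicit Types (l : A * A) (N : 'M[A]_2).

Definition cross l l' := l.1 * l'.2 - l.2 * l'.1.

Lemma crossxx l : cross l l = 0.
Proof. by rewrite /cross mulrC subrr. Qed.

Lemma crossC l l' : cross l l' = - cross l' l.
Proof. by rewrite /cross opprB [l.1 * _]mulrC [l.2 * _]mulrC. Qed.

Definition act N l := (N 0 0 * l.1 + N 0 1 * l.2, N 1 0 * l.1 + N 1 1 * l.2).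

Definition cubic_coef (l1 l2 l3 : A * A) (k : nat) : A :=
  let: (x1, y1) := l1 in let: (x2, y2) := l2 in let: (x3, y3) := l3 in
  nth 0 [:: x1 * x2 * x3;
            x1 * x2 * y3 + x1 * y2 * x3 + y1 * x2 * x3;
            x1 * y2 * y3 + y1 * x2 * y3 + y1 * y2 * x3;
            y1 * y2 * y3] k.

Definition cubic_vec l1 l2 l3 : 'cV[A]_4 := \col_(k < 4) cubic_coef l1 l2 l3 k.

Lemma cubic_vecC12 l1 l2 l3 : cubic_vec l1 l2 l3 = cubic_vec l2 l1 l3.
Proof.
case: l1 l2 l3 => [? ?] [? ?] [? ?].
by apply/matrixP => -[[|[|[|[|?]]]] ?] j; rewrite !mxE //=; ring.
Qed.

Lemma cubic_vecC23 l1 l2 l3 : cubic_vec l1 l2 l3 = cubic_vec l1 l3 l2.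
Proof.
case: l1 l2 l3 => [? ?] [? ?] [? ?].
by apply/matrixP => -[[|[|[|[|?]]]] ?] j; rewrite !mxE //=; ring.
Qed.

Lemma cubic_vec_scale23 c l1 l2 l3 :
  cubic_vec l1 (c * l2.1, c * l2.2) l3 = cubic_vec l1 l2 (c * l3.1, c * l3.2).
Proof.
case: l1 l2 l3 => [? ?] [? ?] [? ?].
by apply/matrixP => -[[|[|[|[|?]]]] ?] j; rewrite !mxE //=; ring.
Qed.

Lemma cubic_vec_lin3 l1 l2 l3 l3' s :
  s *: cubic_vec l1 l2 l3 + cubic_vec l1 l2 l3' =
  cubic_vec l1 l2 (s * l3.1 + l3'.1, s * l3.2 + l3'.2).
Proof.
case: l1 l2 l3 l3' => [? ?] [? ?] [? ?] [? ?].
by apply/matrixP => -[[|[|[|[|?]]]] ?] j; rewrite !mxE //=; ring.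
Qed.

Definition eval_intpoly (P : seq (int * seq nat)) (x : nat -> A) : A :=
  \sum_(t <- P) t.1%:~R * \prod_(i <- t.2) x i.

Lemma eq_eval_intpoly P x y : x =1 y -> eval_intpoly P x = eval_intpoly P y.
Proof. by move=> xy; apply: eq_bigr => t _; under eq_bigr do rewrite xy. Qed.

Definition quartic N (w : 'cV[A]_4) : A :=
  \sum_(t <- quartic_table)
    eval_intpoly t.2 (nth 0 [:: N 0 0; N 0 1; N 1 0; N 1 1]) * \prod_(i <- t.1) w (inord i) 0.

Lemma quartic_cubic N l1 l2 l3 :
  quartic N (cubic_vec l1 l2 l3) =
  cross l2 (act N l1) * cross l1 (act N l2) * cross l3 (act N l1) *
  cross l1 (act N l3) * cross l3 (act N l2) * cross l2 (act N l3).
Proof.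
have idx : all (fun t => all (leq^~ 3) t.1) quartic_table by [].
rewrite /quartic big_seq_cond.
under eq_bigr => t /andP[/(allP idx) /allP t_idx _].
  rewrite (eq_big_seq (cubic_coef l1 l2 l3)); last first.
    by move=> i /t_idx i3; rewrite mxE inordK.
  over.
rewrite -big_seq_cond /eval_intpoly /cubic_coef /cross /act.
case: l1 l2 l3 => [x1 y1] [x2 y2] [x3 y3]; rewrite unlock /=.
ring.
Qed.

Lemma prodr_scale (c : A) (x : nat -> A) s :
  \prod_(i <- s) (c * x i) = c ^+ size s * \prod_(i <- s) x i.
Proof. by rewrite big_split big_const_seq count_predT iter_mulr_1. Qed.

Lemma quarticZ N c w : quartic N (c *: w) = c ^+ 4 * quartic N w.
Proof.
rewrite /quartic mulr_sumr !big_seq; apply: eq_bigr => t /(allP quartic_table_homog)/eqP t4.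
under eq_bigr do rewrite mxE.
by rewrite prodr_scale t4 mulrCA.
Qed.

Lemma quartic0 N : quartic N 0 = 0.
Proof. by rewrite -(scale0r 0) quarticZ expr0n mul0r. Qed.

Lemma prod_linear_poly (a b : nat -> A) s
    (P := \prod_(i <- s) ('X * (a i)%:P + (b i)%:P)) :
  (size P <= (size s).+1)%N /\ P`_(size s) = \prod_(i <- s) a i.
Proof.
rewrite {}/P; elim: s => [|i s [IHsize IHcoef]] /=; first by rewrite !big_nil size_poly1 coefC.
rewrite !big_cons; set P := \prod_(j <- s) _.
have coefP j : (('X * (a i)%:P + (b i)%:P) * P)`_j =
               (if j is j'.+1 then a i * P`_j' else 0) + b i * P`_j.
  by rewrite mulrDl -mulrA coefD coefXM !coefCM; case: j.
split; last by rewrite coefP IHcoef (leq_sizeP _ _ IHsize) // mulr0 addr0.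
apply/leq_sizeP => -[|j] lt_sj //.
by rewrite coefP !(leq_sizeP _ _ IHsize) ?mulr0 ?addr0 // ltnW.
Qed.

End Forms.

Section QuarticMorphism.
Variables (A B : comNzRingType) (f : {rmorphism A -> B}).

Lemma rmorph_nth0 (s : seq A) : f \o nth 0 s =1 nth 0 (map f s).
Proof.
move=> i /=; have [lt_i_s | le_s_i] := ltnP i (size s); first by rewrite (nth_map 0).
by rewrite !nth_default ?size_map ?rmorph0.
Qed.

Lemma rmorph_eval_intpoly P x : f (eval_intpoly P x) = eval_intpoly P (f \o x).
Proof.
rewrite rmorph_sum; apply: eq_bigr => t _.
by rewrite rmorphM rmorph_int rmorph_prod.
Qed.

Lemma rmorph_quartic N w : f (quartic N w) = quartic (map_mx f N) (map_mx f w).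
Proof.
rewrite rmorph_sum; apply: eq_bigr => t _.
rewrite rmorphM rmorph_prod rmorph_eval_intpoly (eq_eval_intpoly _ (rmorph_nth0 _)) /= !mxE.
by congr (_ * _); apply: eq_bigr => i _; rewrite mxE.
Qed.

End QuarticMorphism.

Section LinePoly.
Variable A : comNzRingType.
Implicit Types (N : 'M[A]_2) (p q : 'cV[A]_4).

Definition line_poly N p q : {poly A} :=
  quartic (map_mx polyC N) ('X *: map_mx polyC p + map_mx polyC q).

Lemma horner_line_poly N p q s : (line_poly N p q).[s] = quartic N (s *: p + q).
Proof.
rewrite -horner_evalE rmorph_quartic.
by congr quartic; apply/matrixP => i j; rewrite !mxE /= horner_evalE ?hornerE.
Qed.

Lemma line_polyE N p q :
  line_poly N p q =
  \sum_(t <- quartic_table)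
    (eval_intpoly t.2 (nth 0 [:: N 0 0; N 0 1; N 1 0; N 1 1]))%:P *
    \prod_(i <- t.1) ('X * (p (inord i) 0)%:P + (q (inord i) 0)%:P).
Proof.
apply: eq_bigr => t _.
rewrite rmorph_eval_intpoly (eq_eval_intpoly _ (rmorph_nth0 _ _)) /= !mxE.
by congr (_ * _); apply: eq_bigr => i _; rewrite !mxE.
Qed.

Lemma size_line_poly N p q : (size (line_poly N p q) <= 5)%N.
Proof.
apply/leq_sizeP => j le5j; rewrite line_polyE coef_sum big_seq big1 //.
move=> t /(allP quartic_table_homog)/eqP t4.
have [size_t _] := prod_linear_poly (fun i => p (inord i) 0) (fun i => q (inord i) 0) t.1.
by rewrite coefCM (leq_sizeP _ _ size_t) ?mulr0 // t4.
Qed.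

Lemma coef4_line_poly N p q : (line_poly N p q)`_4%N = quartic N p.
Proof.
rewrite line_polyE coef_sum /quartic !big_seq.
apply: eq_bigr => t /(allP quartic_table_homog)/eqP t4.
have [_ coef_t] := prod_linear_poly (fun i => p (inord i) 0) (fun i => q (inord i) 0) t.1.
by rewrite t4 in coef_t; rewrite coefCM coef_t.
Qed.

End LinePoly.

Lemma size_poly_eq_top (A : nzRingType) (P : {poly A}) n :
  (size P <= n.+1)%N -> P`_n != 0 -> size P = n.+1.
Proof.
move=> size_P coef_n; apply/anti_leq; rewrite size_P ltnNge /=.
by apply: contra coef_n => /leq_sizeP->.
Qed.

Lemma size_line_poly_eq (A : comNzRingType) (N : 'M[A]_2) p q :
  quartic N p != 0 -> size (line_poly N p q) = 5%N.
Proof.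
by move=> Np_neq0; rewrite (size_poly_eq_top (size_line_poly _ _ _)) ?coef4_line_poly.
Qed.

Lemma line_poly_neq0 (A : comNzRingType) (N : 'M[A]_2) p q :
  quartic N p != 0 -> line_poly N p q != 0.
Proof. by move=> Np_neq0; rewrite -size_poly_eq0 size_line_poly_eq. Qed.

Lemma size_deriv_line_poly (A : numDomainType) (N : 'M[A]_2) p q :
  quartic N p != 0 -> size (line_poly N p q)^`() = 4%N.
Proof.
move=> Np_neq0; apply: size_poly_eq_top.
  by have := lt_size_deriv (line_poly_neq0 q Np_neq0); rewrite size_line_poly_eq.
by rewrite coef_deriv coef4_line_poly mulrn_eq0.
Qed.

Lemma map_line_poly (A B : comNzRingType) (f : {rmorphism A -> B}) N p q :
  map_poly f (line_poly N p q) = line_poly (map_mx f N) (map_mx f p) (map_mx f q).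
Proof.
rewrite /line_poly rmorph_quartic; congr quartic; apply/matrixP => i j.
  by rewrite !mxE /= map_polyC.
by rewrite !mxE /= rmorphD rmorphM /= map_polyX !map_polyC.
Qed.

Section Mx22.
Variable A : comNzRingType.
Implicit Types (M : 'M[A]_2) (l : A * A).

Lemma sum_ord2 (F : 'I_2 -> A) : \sum_(i < 2) F i = F 0 + F 1.
Proof. by rewrite big_ord_recl big_ord1; congr (F _ + F _); apply: val_inj. Qed.

Lemma cV2P (u v : 'cV[A]_2) : u 0 0 = v 0 0 -> u 1 0 = v 1 0 -> u = v.
Proof.
move=> e0 e1; apply/matrixP => i j; rewrite (ord1 j).
have [-> | ->] : i = 0 \/ i = 1 by case: i => [[|[|//]] ?]; [left | right]; apply: val_inj.
  exact: e0.
exact: e1.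
Qed.

Lemma lift0_ord2 : lift (0 : 'I_2) 0 = 1. Proof. exact: val_inj. Qed.
Lemma lift1_ord2 : lift (1 : 'I_2) 0 = 0. Proof. exact: val_inj. Qed.

Lemma cofactor_mx22 M i j : cofactor M i j = (-1) ^+ (i + j) * M (lift i 0) (lift j 0).
Proof. by rewrite /cofactor det_mx11 !mxE. Qed.

Lemma det_mx22 M : \det M = M 0 0 * M 1 1 - M 0 1 * M 1 0.
Proof.
rewrite (expand_det_row _ 0) sum_ord2 !cofactor_mx22 lift0_ord2 lift1_ord2 /=; ring.
Qed.

Lemma mxtrace_mx22 M : \tr M = M 0 0 + M 1 1.
Proof. exact: sum_ord2. Qed.

Lemma act_trmx_adj M l :
  act (\adj M)^T l = (M 1 1 * l.1 - M 1 0 * l.2, M 0 0 * l.2 - M 0 1 * l.1).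
Proof. by rewrite /act !mxE !cofactor_mx22 lift0_ord2 lift1_ord2 /=; congr (_, _); ring. Qed.

Lemma mxtrace_trmx_adj M : \tr (\adj M)^T = \tr M.
Proof. by rewrite !mxtrace_mx22 !mxE !cofactor_mx22 lift0_ord2 lift1_ord2 /=; ring. Qed.

Lemma det_trmx_adj M : \det (\adj M)^T = \det M.
Proof. by rewrite !det_mx22 !mxE !cofactor_mx22 lift0_ord2 lift1_ord2 /=; ring. Qed.

Definition vec2 (x y : A) : 'cV[A]_2 := \col_i nth 0 [:: x; y] i.

Lemma vec2_neq0 x y : x != 0 -> vec2 x y != 0.
Proof. by apply: contraNneq => /matrixP/(_ 0 0); rewrite !mxE /= => ->. Qed.

Lemma mulmx_vec2 M x y : M *m vec2 x y = vec2 (M 0 0 * x + M 0 1 * y) (M 1 0 * x + M 1 1 * y).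
Proof. by apply/cV2P; rewrite !mxE sum_ord2 !mxE. Qed.

End Mx22.

Section LinearForms.
Variable F : fieldType.
Implicit Types (l : F * F) (N : 'M[F]_2).

Lemma cross_eq0_scaled l l' :
  l != (0, 0) -> cross l l' = 0 -> exists c, l' = (c * l.1, c * l.2).
Proof.
case: l l' => [x y] [x' y'] /= l_neq0 /eqP; rewrite /cross subr_eq0 /= => /eqP xy'.
have [x0 | x_neq0] := eqVneq x 0.
  have y_neq0 : y != 0 by apply: contraNneq l_neq0 => y0; rewrite x0 y0.
  move: xy'; rewrite x0 mul0r => /esym/eqP; rewrite mulf_eq0 (negPf y_neq0) => /eqP ->.
  by exists (y' / y); rewrite divfK // mulr0.
exists (x' / x); rewrite divfK //.
by rewrite mulrAC [x' * y]mulrC -xy' [x * y']mulrC mulfK.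
Qed.

Lemma act_eigenvector N lam :
  lam ^+ 2 - \tr N * lam + \det N = 0 -> lam *+ 2 != \tr N ->
  exists2 e, e != (0, 0) & act N e = (lam * e.1, lam * e.2).
Proof.
rewrite mxtrace_mx22 det_mx22 => char_lam simple_lam.
have {}char_lam : lam ^+ 2 = (N 0 0 + N 1 1) * lam - (N 0 0 * N 1 1 - N 0 1 * N 1 0).
  by apply/eqP; rewrite -subr_eq0 -char_lam; apply/eqP; ring.
have [e1_eq0 | e1_neq0] := eqVneq (N 0 1, lam - N 0 0) (0, 0).
  case: e1_eq0 => N01 /eqP; rewrite subr_eq0 => /eqP lamE.
  exists (lam - N 1 1, N 1 0).
    apply: contraNneq simple_lam => -[/eqP]; rewrite subr_eq0 => /eqP lamE' _.
    by rewrite mulr2n {1}lamE {1}lamE'.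
  by rewrite /act /= N01 lamE; congr (_, _); ring.
exists (N 0 1, lam - N 0 0) => //; rewrite /act /=; congr (_, _); first ring.
by rewrite [RHS]mulrBr -expr2 char_lam; ring.
Qed.

Lemma act_scale N c l : act N (c * l.1, c * l.2) = (c * (act N l).1, c * (act N l).2).
Proof. by rewrite /act /=; congr (_, _); ring. Qed.

Lemma cross_eigenvectors_neq0 N l1 l2 lam1 lam2 :
  l1 != (0, 0) -> l2 != (0, 0) -> lam1 != lam2 ->
  act N l1 = (lam1 * l1.1, lam1 * l1.2) -> act N l2 = (lam2 * l2.1, lam2 * l2.2) ->
  cross l1 l2 != 0.
Proof.
move=> l1_neq0 l2_neq0 lam12 eig1 eig2; apply/eqP => /(cross_eq0_scaled l1_neq0) [c l2E].
have : act N l2 = (lam1 * l2.1, lam1 * l2.2).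
  by rewrite l2E act_scale eig1 /=; congr (_, _); ring.
rewrite eig2 => -[e1 e2]; move: l2_neq0.
have comp0 x : lam2 * x = lam1 * x -> x = 0.
  move/eqP; rewrite -subr_eq0 -mulrBl mulf_eq0 subr_eq0 eq_sym (negPf lam12) /=.
  by move/eqP.
by case: l2 e1 e2 {eig2 l2E} => x y /= /comp0 -> /comp0 ->; rewrite eqxx.
Qed.

End LinearForms.

Section LinearPolys.
Variable A : comNzRingType.

Definition lin_poly (l : A * A) : {poly A} := 'X * l.1%:P + l.2%:P.

Lemma lin_poly_prod3 l1 l2 l3 :
  lin_poly l1 * lin_poly l2 * lin_poly l3 = \poly_(i < 4) cubic_coef l1 l2 l3 (3 - i).
Proof.
case: l1 l2 l3 => [x1 y1] [x2 y2] [x3 y3].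
rewrite poly_def !big_ord_recr big_ord0 /= -!mul_polyC !polyCD !polyCM /lin_poly /=.
ring.
Qed.

End LinearPolys.

Lemma poly_factor_linear (F : closedFieldType) (p : {poly F}) n :
  p != 0 -> (size p <= n.+1)%N ->
  exists c (ls : seq (F * F)),
    [/\ c != 0, size ls = n, all (fun l => l != (0, 0)) ls
       & p = c *: \prod_(l <- ls) lin_poly l].
Proof.
move=> p_neq0 size_p; have [rs pE] := closed_field_poly_normal p.
have size_rs : (size rs <= n)%N.
  by move: size_p; rewrite pE size_scale ?lead_coef_eq0 // size_prod_XsubC.
exists (lead_coef p), ([seq (1, - r) | r <- rs] ++ nseq (n - size rs) (0, 1)).
split; first by rewrite lead_coef_eq0.
- by rewrite size_cat size_map size_nseq subnKC.
- rewrite all_cat all_nseq xpair_eqE oner_eq0 andbF orbT andbT; apply/allP => _ /mapP[r _ ->].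
  by rewrite xpair_eqE oner_eq0.
rewrite {1}pE big_cat big_map big_nseq /lin_poly /= polyC0 polyC1 mulr0 add0r.
rewrite iter_mulr_1 expr1n mulr1; congr (_ *: _).
by apply: eq_bigr => r _; rewrite /= mulr1 polyCN.
Qed.

Lemma cubic_vec_factor (F : closedFieldType) (w : 'cV[F]_4) : w != 0 ->
  exists l1 l2 l3, [/\ l1 != (0, 0), l2 != (0, 0), l3 != (0, 0) & w = cubic_vec l1 l2 l3].
Proof.
move=> w_neq0; pose p := \poly_(i < 4) w (inord (3 - i)) 0.
have wE (k : 'I_4) : w k 0 = p`_(3 - k).
  have k3 : (k <= 3)%N by rewrite -ltnS.
  by rewrite coef_poly ltnS leq_subr subKn // inord_val.
have p_neq0 : p != 0.
  by apply: contraNneq w_neq0 => p0; apply/eqP/matrixP => k j; rewrite (ord1 j) wE p0 coef0 mxE.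
have [c [ls [c_neq0 size_ls all_ls pE]]] := poly_factor_linear p_neq0 (size_poly _ _).
case: ls size_ls all_ls pE => [|l1 [|l2 [|l3 [|? ?]]]] // _.
move=> /and4P[l1_neq0 l2_neq0 l3_neq0 _] pE.
exists (c * l1.1, c * l1.2), l2, l3; split => //.
  by case: l1 l1_neq0 {pE} => x y; rewrite !xpair_eqE !mulf_eq0 (negPf c_neq0).
apply/matrixP => k j; have k3 : (k <= 3)%N by rewrite -ltnS.
rewrite (ord1 j) wE pE coefZ !big_cons big_nil mulr1 mulrA.
rewrite lin_poly_prod3 coef_poly ltnS leq_subr subKn // mxE.
by case: l1 l2 l3 {l1_neq0 l2_neq0 l3_neq0 pE k3} => [? ?] [? ?] [? ?];
   case: k => [[|[|[|[|?]]]] ?] //=; ring.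
Qed.

Section SeparableRoots.
Variable F : closedFieldType.
Implicit Types (f : {poly F}) (rs : seq F).

Lemma separable_roots f : separable_poly f ->
  exists rs, [/\ uniq rs, size rs = (size f).-1 & forall s, root f s = (s \in rs)].
Proof.
move=> sep_f; have [rs fE] := closed_field_poly_normal f.
have lc_neq0 : lead_coef f != 0 by rewrite lead_coef_eq0 separable_poly_neq0.
exists rs; split.
- by rewrite -separable_prod_XsubC -(eqp_separable (eqp_scale _ lc_neq0)) -fE.
- by rewrite {1}fE size_scale // size_prod_XsubC.
- by move=> s; rewrite {1}fE rootZ // root_prod_XsubC.
Qed.

Lemma uniq_roots_separable f rs :
  size f = (size rs).+1 -> uniq rs -> all (root f) rs -> separable_poly f.
Proof.
move=> size_f uniq_rs roots_rs; have [rs' fE] := closed_field_poly_normal f.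
have lc_neq0 : lead_coef f != 0 by rewrite lead_coef_eq0 -size_poly_eq0 size_f.
rewrite fE (eqp_separable (eqp_scale _ lc_neq0)) separable_prod_XsubC.
apply: (leq_size_uniq uniq_rs).
  by move=> s /(allP roots_rs); rewrite fE rootZ // root_prod_XsubC.
by move: size_f; rewrite {1}fE size_scale // size_prod_XsubC => -[->].
Qed.

End SeparableRoots.

Lemma resultant_deriv_neq0 (F : fieldType) (f : {poly F}) :
  f != 0 -> (resultant f f^`() != 0) = separable_poly f.
Proof.
move=> f_neq0; rewrite resultant_eq0 unlock /separable_poly coprimep_def -leqNgt.
have : size (gcdp f f^`()) != 0%N by rewrite size_poly_eq0 gcdp_eq0 negb_and f_neq0.
by case: (size _) => [|[|n]].
Qed.

Lemma rmorph_resultant (aR rR : comNzRingType) (f : {rmorphism aR -> rR}) (p q : {poly aR}) :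
  size (map_poly f p) = size p -> size (map_poly f q) = size q ->
  f (resultant p q) = resultant (map_poly f p) (map_poly f q).
Proof.
move=> size_fp size_fq; rewrite /resultant /Sylvester_mx size_fp size_fq.
rewrite -det_map_mx /= map_col_mx; congr (\det (col_mx _ _));
  by apply: map_lin1_mx => v; rewrite map_poly_rV rmorphM /= map_rVpoly.
Qed.

Lemma nat_notin (F : numDomainType) (s : seq F) : exists n : nat, n%:R \notin s.
Proof.
have /allPn[_ /mapP[n _ ->] n_notin] : ~~ all (mem s) [seq n%:R : F | n <- iota 0 (size s).+1].
  apply/negP => /allP sub; have := uniq_leq_size _ sub.
  rewrite size_map size_iota ltnn map_inj_uniq ?iota_uniq // => [/(_ isT) //|m n].
  by move/eqP; rewrite eqr_nat => /eqP.
by exists n.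
Qed.

Section Pencil.
Variables (F : fieldType) (N : 'M[F]_2) (r n : F) (e1 e2 : F * F).
Hypotheses (eig1 : act N e1 = (r * n * e1.1, r * n * e1.2))
           (eig2 : act N e2 = (n * e2.1, n * e2.2)).

Definition comb (x : F * F) := (x.1 * e1.1 + x.2 * e2.1, x.1 * e1.2 + x.2 * e2.2).

Definition pencil_cross (x y : F * F) := x.2 * y.1 - r * x.1 * y.2.

Lemma cross_comb x y : cross (comb y) (act N (comb x)) = n * cross e1 e2 * pencil_cross x y.
Proof.
have -> : act N (comb x) = (x.1 * (act N e1).1 + x.2 * (act N e2).1,
                            x.1 * (act N e1).2 + x.2 * (act N e2).2).
  by rewrite /act /comb /=; congr (_, _); ring.
by rewrite eig1 eig2 /cross /comb /pencil_cross /=; ring.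
Qed.

Lemma quartic_pencil x y z :
  quartic N (cubic_vec (comb x) (comb y) (comb z)) = (n * cross e1 e2) ^+ 6 *
    (pencil_cross x y * pencil_cross y x * pencil_cross x z *
     pencil_cross z x * pencil_cross y z * pencil_cross z y).
Proof. by rewrite quartic_cubic !cross_comb; ring. Qed.

End Pencil.

Lemma uniq_pencil_roots (F : fieldType) (r b : F) :
  r != 0 -> r ^+ 2 != 1 -> b \notin [:: 0; 1; r ^+ 2; r ^- 2] ->
  uniq [:: r; r^-1; r / b; (r * b)^-1].
Proof.
move=> r_neq0 r2_neq1; rewrite !inE !negb_or => /and4P[b_neq0 b_neq1 b_neq_r2 b_neq_ri2].
rewrite /= !inE !negb_or andbT -!(subr_eq0 r) -!(subr_eq0 r^-1) -!(subr_eq0 (r / b)).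
have nz : (b != 0) && (r != 0) by rewrite b_neq0 r_neq0.
rewrite (_ : r - r^-1 = (r ^+ 2 - 1) / r); last by field.
rewrite (_ : r - r / b = r * (b - 1) / b); last by field.
rewrite (_ : r - (r * b)^-1 = r ^+ 2 * (b - r ^- 2) / (r * b)); last by field.
rewrite (_ : r^-1 - r / b = (b - r ^+ 2) / (r * b)); last by field.
rewrite (_ : r^-1 - (r * b)^-1 = (b - 1) / (r * b)); last by field.
rewrite (_ : r / b - (r * b)^-1 = (r ^+ 2 - 1) / (r * b)); last by field.
by rewrite !mulf_neq0 ?invr_eq0 ?mulf_neq0 ?expf_neq0 ?subr_eq0.
Qed.

Lemma eigenbasis (F : numClosedFieldType) (N : 'M[F]_2) :
  \tr N != 0 -> \tr N ^+ 2 != 4 * \det N ->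
  exists n1 n2 e1 e2,
  [/\ n1 ^+ 2 != n2 ^+ 2, n1 * n2 = \det N, act N e1 = (n1 * e1.1, n1 * e1.2),
      act N e2 = (n2 * e2.1, n2 * e2.2) & cross e1 e2 != 0].
Proof.
move=> trN_neq0 discrN_neq0.
pose s := sqrtC (\tr N ^+ 2 - 4 * \det N).
have s2 : s ^+ 2 = \tr N ^+ 2 - 4 * \det N by rewrite sqrtCK.
have s_neq0 : s != 0.
  by apply: contra discrN_neq0 => /eqP s0; rewrite -subr_eq0 -s2 s0 expr0n.
pose n1 := (\tr N + s) / 2; pose n2 := (\tr N - s) / 2.
have n12 : n1 * n2 = \det N.
  have -> : n1 * n2 = (\tr N ^+ 2 - s ^+ 2) / 4 by rewrite /n1 /n2; field.
  by rewrite s2; field.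
have charE n : n ^+ 2 - \tr N * n + \det N = (n - n1) * (n - n2).
  by rewrite -n12 /n1 /n2; field.
have simple n : n = n1 \/ n = n2 -> n *+ 2 != \tr N.
  case=> ->; rewrite /n1 /n2 mulr2n; apply: contra s_neq0 => /eqP E; apply/eqP.
  - by have := congr1 (fun x => x - \tr N) E; rewrite subrr => <-; field.
  - by have := congr1 (fun x => \tr N - x) E; rewrite subrr => <-; field.
have root1 : n1 ^+ 2 - \tr N * n1 + \det N = 0 by rewrite charE subrr mul0r.
have root2 : n2 ^+ 2 - \tr N * n2 + \det N = 0 by rewrite charE subrr mulr0.
have [e1 e1_neq0 eig1] := act_eigenvector root1 (simple n1 (or_introl erefl)).
have [e2 e2_neq0 eig2] := act_eigenvector root2 (simple n2 (or_intror erefl)).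
have n1_neq_n2 : n1 != n2.
  by rewrite -subr_eq0 (_ : n1 - n2 = s) // /n1 /n2; field.
exists n1, n2, e1, e2; split=> //; last exact: cross_eigenvectors_neq0 eig1 eig2.
by rewrite -subr_eq0 (_ : _ - _ = \tr N * s) ?mulf_neq0 // /n1 /n2; field.
Qed.

(* On the line of cubics [A, B, l] with A, B fixed and l running through the
   pencil spanned by the eigenvectors, [quartic_pencil] splits F into factors
   linear in l; for a suitable integer b they have the four distinct roots
   r, 1/r, r/b, 1/(r b), where r is the ratio of the eigenvalues. *)
Lemma separable_line_witness (F : numClosedFieldType) (N : 'M[F]_2) :
  \det N != 0 -> \tr N != 0 -> \tr N ^+ 2 != 4 * \det N ->
  exists p q, quartic N p != 0 /\ separable_poly (line_poly N p q).
Proof.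
move=> detN_neq0 trN_neq0 discrN_neq0.
have [n1 [n [e1 [e2 [sq_neq n12 eig1 eig2 D_neq0]]]]] := eigenbasis trN_neq0 discrN_neq0.
have [n1_neq0 n_neq0] : n1 != 0 /\ n != 0 by apply/andP; rewrite -negb_or -mulf_eq0 n12.
have [r n1E r_neq0] : exists2 r, n1 = r * n & r != 0.
  by exists (n1 / n); rewrite ?divfK ?mulf_neq0 ?invr_eq0.
subst n1; have r2_neq1 : r ^+ 2 != 1.
  by apply: contra sq_neq; rewrite exprMn => /eqP->; rewrite mul1r.
have [k] := nat_notin [:: r; r^-1; 0; 1; r ^+ 2; r ^- 2].
move: (k%:R : F) => b; rewrite in_cons negb_or => /andP[b_neq_r].
rewrite in_cons negb_or => /andP[b_neq_ri b_notin].
have b_neq0 : b != 0 by move: b_notin; rewrite in_cons negb_or => /andP[].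
pose L := comb e1 e2; pose P := cubic_vec (L (1, 1)) (L (1, b)).
have pencil := quartic_pencil eig1 eig2.
have lineE s : s *: P (L (1, 0)) + P (L (0, 1)) = P (L (s, 1)).
  by rewrite cubic_vec_lin3 /L /comb /=; congr cubic_vec; congr (_, _); ring.
exists (P (L (1, 0))), (P (L (0, 1))).
have Np_neq0 : quartic N (P (L (1, 0))) != 0.
  rewrite pencil /pencil_cross /= !(mulr1, mul1r, mulr0, mul0r, subr0, sub0r).
  rewrite !mulf_neq0 ?expf_neq0 ?oppr_eq0 ?mulf_neq0 ?oner_eq0 // subr_eq0 // eq_sym.
  apply: contra b_neq_ri => /eqP rb1; apply/eqP/(mulfI r_neq0).
  by rewrite mulfV // rb1.
split=> //; apply: (@uniq_roots_separable _ _ [:: r; r^-1; r / b; (r * b)^-1]).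
- by rewrite size_line_poly_eq.
- exact: uniq_pencil_roots.
rewrite /= /root !horner_line_poly !lineE !pencil andbT.
rewrite (_ : pencil_cross r (1, 1) (r, 1) = 0); last by rewrite /pencil_cross /=; ring.
rewrite (_ : pencil_cross r (r^-1, 1) (1, 1) = 0); last by rewrite /pencil_cross /=; field.
rewrite (_ : pencil_cross r (1, b) (r / b, 1) = 0); last by rewrite /pencil_cross /=; field.
rewrite (_ : pencil_cross r ((r * b)^-1, 1) (1, b) = 0); last first.
  by rewrite /pencil_cross /=; field; rewrite r_neq0 b_neq0.
by rewrite !(mulr0, mul0r) eqxx.
Qed.

Section Upsilon.
Variable R : realType.
Local Notation C := R[i].
Implicit Types (g : 'M[C]_2) (a b : 'cV[C]_2) (l : C * C) (w : 'cV[C]_4).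

Definition form_root l : 'cV[C]_2 := vec2 (- l.2) l.1.

Lemma linform_form_root l : linform (form_root l) = l.
Proof. by case: l => x y; rewrite /linform !mxE /= opprK. Qed.

Lemma linform_eq0 a : (linform a == (0, 0)) = (a == 0).
Proof.
apply/idP/eqP => [|->]; last by rewrite /linform !mxE oppr0.
by rewrite xpair_eqE oppr_eq0 => /andP[/eqP a1 /eqP a0]; apply/cV2P; rewrite mxE.
Qed.

Lemma linform_mulmx g a : linform (g *m a) = act (\adj g)^T (linform a).
Proof. by rewrite act_trmx_adj /linform !mxE !sum_ord2 /=; congr (_, _); ring. Qed.

Lemma cubic3E l1 l2 l3 : cubic3 l1 l2 l3 = cubic_vec l1 l2 l3.
Proof. by case: l1 l2 l3 => [? ?] [? ?] [? ?]. Qed.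

Lemma Upsilon_cubic_vec g l1 l2 l3 : g \in unitmx ->
  l1 != (0, 0) -> l2 != (0, 0) -> l3 != (0, 0) -> cross l2 (act (\adj g)^T l1) = 0 ->
  Upsilon g (cubic_vec l1 l2 l3).
Proof.
move=> g_unit l1_neq0 l2_neq0 l3_neq0 /eqP; rewrite crossC oppr_eq0 => /eqP cross0.
have gl1_neq0 : act (\adj g)^T l1 != (0, 0).
  rewrite -(linform_form_root l1) -linform_mulmx linform_eq0.
  apply: contraNneq l1_neq0 => /(congr1 (mulmx (invmx g))); rewrite mulKmx // mulmx0.
  by move=> /eqP; rewrite -linform_eq0 linform_form_root.
have [c l2E] := cross_eq0_scaled gl1_neq0 cross0.
have c_neq0 : c != 0 by apply: contraNneq l2_neq0 => c0; rewrite l2E c0 !mul0r.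
exists (form_root l1), (form_root (c * l3.1, c * l3.2)).
rewrite cubic3E -!linform_eq0 !linform_form_root linform_mulmx linform_form_root.
rewrite -cubic_vec_scale23 -l2E.
split=> //; split=> //.
by case: l3 l3_neq0 {l2E} => x y; rewrite !xpair_eqE !mulf_eq0 (negPf c_neq0).
Qed.

Lemma Upsilon_quartic g w : g \in unitmx -> w != 0 ->
  Upsilon g w <-> quartic (\adj g)^T w = 0.
Proof.
move=> g_unit w_neq0; split.
  by case=> a [b [_ [_ ->]]]; rewrite cubic3E quartic_cubic -linform_mulmx crossxx !mul0r.
have [l1 [l2 [l3 [l1_neq0 l2_neq0 l3_neq0 ->]]]] := cubic_vec_factor w_neq0.
have key := Upsilon_cubic_vec g_unit.
rewrite quartic_cubic => /eqP; rewrite !mulf_eq0 -!orbA.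
case/or4P => [/eqP| /eqP | /eqP | /or3P[/eqP | /eqP | /eqP]] cross0.
- exact: key.
- by rewrite cubic_vecC12; apply: key.
- by rewrite cubic_vecC23; apply: key.
- by rewrite cubic_vecC23 cubic_vecC12; apply: key.
- by rewrite cubic_vecC12 cubic_vecC23; apply: key.
- by rewrite cubic_vecC12 cubic_vecC23 cubic_vecC12; apply: key.
Qed.

End Upsilon.

Section LineCount.
Variable R : realType.
Local Notation C := R[i].
Variables (N : 'M[C]_2) (S : 'cV[C]_4 -> Prop).
Hypothesis S_quartic : forall w, w != 0 -> S w <-> quartic N w = 0.
Variables (p q : 'cV[C]_4) (rs : seq C).
Hypotheses (Np_neq0 : quartic N p != 0) (uniq_rs : uniq rs) (two_roots : (1 < size rs)%N).
Hypothesis roots_rs : forall s, quartic N (s *: p + q) = 0 <-> s \in rs.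

Lemma line_independent s t : s *: p + t *: q = 0 -> s = 0 /\ t = 0.
Proof.
have p_neq0 : p != 0 by apply: contraNneq Np_neq0 => ->; rewrite quartic0.
move=> st0; have [t0 | t_neq0] := eqVneq t 0.
  move: st0; rewrite t0 scale0r addr0 => /eqP.
  by rewrite scaler_eq0 (negPf p_neq0) orbF => /eqP.
have qE : q = (- (s / t)) *: p.
  have tq : t *: q = - (s *: p) by apply/eqP; rewrite -addr_eq0 addrC st0.
  by rewrite -[q](scalerK t_neq0) tq scalerN scalerA mulrC scaleNr.
have root_st r : r \in rs -> r = s / t.
  move/roots_rs/eqP; rewrite qE -scalerDl quarticZ mulf_eq0 (negPf Np_neq0) orbF expf_eq0 /=.
  by rewrite subr_eq0 => /eqP.
have r0 := root_st _ (mem_nth 0 (ltnW two_roots)).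
have r1 := root_st _ (mem_nth 0 two_roots).
by have := nth_uniq 0 (ltnW two_roots) two_roots uniq_rs; rewrite r0 r1 eqxx.
Qed.

Lemma proj_card_line : proj_card (fun w => on_line p q w /\ S w) (size rs).
Proof.
pose f (i : 'I_(size rs)) := rs`_i *: p + q.
have f_neq0 i : f i != 0.
  apply/eqP => fi0; have /line_independent[_ /eqP] : rs`_i *: p + 1 *: q = 0.
    by rewrite scale1r.
  by rewrite oner_eq0.
exists f; split; [|split].
- move=> i; split; first exact: f_neq0.
  split; first by exists rs`_i, 1; rewrite scale1r.
  by apply/(S_quartic (f_neq0 i))/roots_rs; rewrite mem_nth.
- move=> i j [c [c_neq0 fE]]; have := line_independent (s := rs`_j - c * rs`_i) (t := 1 - c).
  case.
    have -> : (rs`_j - c * rs`_i) *: p + (1 - c) *: q = f j - c *: f i.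
      by rewrite /f scalerDr scalerA !scalerBl scale1r opprD addrACA.
    by rewrite fE subrr.
  move=> /eqP; rewrite subr_eq0 => /eqP ij /eqP; rewrite subr_eq0 => /eqP c1.
  by apply/ord_inj/eqP; rewrite -(nth_uniq 0 _ _ uniq_rs) // ij -c1 mul1r.
- move=> w w_neq0 [[s [t wE]] Sw].
  have t_neq0 : t != 0.
    apply/eqP => t0; have /(S_quartic w_neq0) := Sw.
    rewrite wE t0 scale0r addr0 quarticZ => /eqP.
    rewrite mulf_eq0 (negPf Np_neq0) orbF expf_eq0 /=.
    by move=> /eqP s0; move: w_neq0; rewrite wE s0 t0 !scale0r addr0 eqxx.
  have wE' : w = t *: ((s / t) *: p + q) by rewrite wE scalerDr scalerA mulrC divfK.
  have : s / t \in rs.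
    apply/roots_rs/eqP; have /(S_quartic w_neq0)/eqP := Sw.
    by rewrite wE' quarticZ mulf_eq0 expf_eq0 /= (negPf t_neq0).
  rewrite -index_mem => idx; exists (Ordinal idx), t; split=> //.
  by rewrite /f /= nth_index ?wE' // -index_mem.
Qed.

End LineCount.

Section GenericLine.
Variable R : realType.
Local Notation C := R[i].
Local Notation MP := {mpoly C[8]}.
Variable N : 'M[C]_2.
Implicit Types (p q : 'cV[C]_4).

Definition pq_vars (k : nat) : 'cV[MP]_4 := \col_(i < 4) 'X_(inord (k + i)).

Definition generic_line_poly : {poly MP} :=
  line_poly (map_mx (fun c => c%:MP) N) (pq_vars 0) (pq_vars 4).

Definition line_discriminant : MP :=
  quartic (map_mx (fun c => c%:MP) N) (pq_vars 0) *
  resultant generic_line_poly generic_line_poly^`().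

Lemma meval_pq_vars p q :
  map_mx (meval (pq_coords p q)) (pq_vars 0) = p /\
  map_mx (meval (pq_coords p q)) (pq_vars 4) = q.
Proof.
split; apply/matrixP => i j; rewrite (ord1 j) !mxE mevalXU /pq_coords inordK;
  have := ltn_ord i; rewrite ?add0n => lt_i4.
- by rewrite lt_i4 inord_val.
- exact: ltn_trans lt_i4 _.
- by rewrite ltnNge leq_addr /= addKn inord_val.
- exact: leq_add (leqnn 4) lt_i4.
Qed.

Lemma meval_line_discriminant p q :
  line_discriminant.@[pq_coords p q] =
  quartic N p * resultant (line_poly N p q) (line_poly N p q)^`().
Proof.
have [evp evq] := meval_pq_vars p q.
have evN : map_mx (meval (pq_coords p q)) (map_mx (fun c => c%:MP) N) = N.
  by apply/matrixP => i j; rewrite !mxE mevalC.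
have evL : map_poly (meval (pq_coords p q)) generic_line_poly = line_poly N p q.
  by rewrite map_line_poly evN evp evq.
rewrite /line_discriminant mevalM rmorph_quartic evN evp.
have [-> | Np_neq0] := eqVneq (quartic N p) 0; first by rewrite !mul0r.
have size_L := size_line_poly_eq q Np_neq0.
have size_evL : size (map_poly (meval (pq_coords p q)) generic_line_poly) =
                size generic_line_poly.
  by apply/anti_leq; rewrite size_poly evL size_L size_line_poly.
have L_neq0 : generic_line_poly != 0 by rewrite -size_poly_eq0 -size_evL evL size_L.
have size_evL' : size (map_poly (meval (pq_coords p q)) generic_line_poly^`()) =
                 size generic_line_poly^`().
  apply/anti_leq; rewrite size_poly -deriv_map evL size_deriv_line_poly //=.
  by have := lt_size_deriv L_neq0; rewrite -size_evL evL size_L.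
by rewrite rmorph_resultant // -deriv_map evL.
Qed.

End GenericLine.

Lemma has_degree_Upsilon (R : realType) (g : 'M[R[i]]_2) : g \in unitmx ->
  (exists p q, quartic (\adj g)^T p != 0 /\ separable_poly (line_poly (\adj g)^T p q)) ->
  has_degree (Upsilon g) 4%N.
Proof.
move=> g_unit [p0 [q0 [Np0_neq0 sep0]]]; set N := (\adj g)^T in Np0_neq0 sep0 *.
exists (line_discriminant N); split.
  have : (line_discriminant N).@[pq_coords p0 q0] != 0.
    by rewrite meval_line_discriminant mulf_neq0 // resultant_deriv_neq0 ?line_poly_neq0.
  by apply: contraNneq => ->; rewrite meval0.
move=> p q; rewrite meval_line_discriminant mulf_eq0 negb_or => /andP[Np_neq0].
rewrite resultant_deriv_neq0 ?line_poly_neq0 //.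
move=> /separable_roots[rs [uniq_rs size_rs roots_rs]].
rewrite size_line_poly_eq //= in size_rs; rewrite -[X in proj_card _ X]size_rs.
apply: (proj_card_line (N := N)) => //; first by move=> w; apply: Upsilon_quartic.
  by rewrite size_rs.
by move=> s; rewrite -roots_rs /root horner_line_poly; split=> /eqP.
Qed.

Section SU2.
Variable R : realType.
Local Notation C := R[i].
Implicit Types (g : 'M[C]_2).

Lemma SU2_entries g : is_SU2 g ->
  [/\ g 1 1 = conjc (g 0 0), g 0 1 = - conjc (g 1 0)
    & g 0 0 * conjc (g 0 0) + g 1 0 * conjc (g 1 0) = 1].
Proof.
case=> unitary det1; have adj_g := mul_adj_mx g; rewrite det1 in adj_g.
have adjE : (map_mx conjc g)^T = \adj g.
  by rewrite -[LHS]mul1mx -adj_g -mulmxA unitary mulmx1.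
have entry i j : conjc (g j i) = (-1) ^+ (j + i) * g (lift j 0) (lift i 0).
  by move/matrixP/(_ i j): adjE; rewrite !mxE cofactor_mx22.
have g11 : g 1 1 = conjc (g 0 0) by rewrite entry lift0_ord2 /= mul1r.
have g01 : g 0 1 = - conjc (g 1 0) by rewrite entry lift0_ord2 lift1_ord2 /= mulN1r opprK.
by split=> //; rewrite -det1 det_mx22 g11 g01; ring.
Qed.

Lemma bloch_vec2 (x y : C) d k :
  complex.Re (conjc x * x) + complex.Re (conjc y * y) = d ->
  bloch (vec2 x y) k 0 =
  nth 0 [:: 2 * complex.Re (conjc x * y); 2 * complex.Im (conjc x * y);
            complex.Re (conjc x * x) - complex.Re (conjc y * y)] k / d.
Proof. by move=> <-; rewrite !mxE; case: k => [[|[|[|k]]] ?]. Qed.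

Lemma bloch_axes :
  [/\ bloch (vec2 (1 : C) 1) = delta_mx 0 0, bloch (vec2 (1 : C) 'i) = delta_mx 1 0
    & bloch (vec2 (1 : C) 0) = delta_mx 2%:R 0].
Proof.
split; apply/matrixP => k j; rewrite (ord1 j) (bloch_vec2 _ erefl) mxE;
  by case: k => [[|[|[|k]]] ?] //=; simpc; field.
Qed.

Lemma SU2_rotation_trace g rho : is_SU2 g ->
  (forall a, a != 0 -> bloch (g *m a) = rho *m bloch a) ->
  \tr rho = 4 * complex.Re (g 0 0) ^+ 2 - 1.
Proof.
move=> gSU hrho; have [g11 g01 norm1] := SU2_entries gSU.
have [bloch_x bloch_y bloch_z] := bloch_axes.
have diag v k : v != 0 -> bloch v = delta_mx k 0 -> rho k k = bloch (g *m v) k 0.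
  by move=> v_neq0 bv; rewrite hrho // bv -colE mxE.
have -> : \tr rho = rho 0 0 + rho 1 1 + rho 2%:R 2%:R.
  rewrite /mxtrace !big_ord_recl big_ord0 addr0 addrA.
  by congr (rho _ _ + rho _ _ + rho _ _); apply: val_inj.
have one_neq0 : (1 : C) != 0 := oner_neq0 _.
rewrite (diag _ 0 (vec2_neq0 _ one_neq0) bloch_x) (diag _ 1 (vec2_neq0 _ one_neq0) bloch_y).
rewrite (diag _ 2%:R (vec2_neq0 _ one_neq0) bloch_z) !mulmx_vec2 g11 g01.
move: norm1; case: (g 0 0) => a1 a2; case: (g 1 0) => b1 b2; simpc => norm1.
move/(congr1 (@complex.Re R)): norm1 => /= norm1.
by rewrite (bloch_vec2 0 (d := 2)) ?(bloch_vec2 1 (d := 2)) ?(bloch_vec2 2%:R (d := 1)) /=;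
  simpc; lra.
Qed.

Lemma SU2_small_rotation g eps : 0 < eps < pi / 2 -> is_SU2 g -> lifts_rotation_by g eps ->
  \tr g != 0 /\ \tr g ^+ 2 != 4 * \det g.
Proof.
move=> /andP[eps_gt0 eps_lt] gSU [rho [[_ [_ tr_rho]] hrho]].
have [g11 _ _] := SU2_entries gSU; have det1 : \det g = 1 by case: gSU.
have := SU2_rotation_trace gSU hrho; rewrite tr_rho mxtrace_mx22 det1 g11.
have cos_gt0 : 0 < cos eps by apply: cos_gt0_pihalf; apply/andP; split => //; lra.
have sin_gt0 : 0 < sin eps by apply: sin_gt0_pihalf; apply/andP.
have cos_lt1 : cos eps < 1 by have := cos2Dsin2 eps; nra.
case: (g 0 0) => a1 a2 /= cosE; simpc.
by split; apply/negP => /eqP/(congr1 (@complex.Re R)) /=; nra.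
Qed.

End SU2.

Theorem proposition5p38 (R : realType) :
  exists delta : R, 0 < delta /\
    forall (eps : R) (g : 'M[complex R]_2),
      0 < eps < delta -> is_SU2 g -> lifts_rotation_by g eps ->
      has_degree (Upsilon g) 4.
Proof.
exists (pi / 2); split; first by rewrite divr_gt0 // pi_gt0.
move=> eps g eps_small gSU g_rot; have det1 : \det g = 1 by case: gSU.
have [trg_neq0 discr_neq0] := SU2_small_rotation eps_small gSU g_rot.
apply: has_degree_Upsilon; first by rewrite unitmxE det1 unitr1.
by apply: separable_line_witness; rewrite ?det_trmx_adj ?mxtrace_trmx_adj // det1 oner_eq0.
Qed.
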